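(* For every fixed $i\ge0$, as $n\to\infty$ the power series $D_{n-i}(z)/D_n(z)$ converge (coefficientwise, as formal power series in $z$) to $(1-t)^{-2i}$, where $t$ is the power series with $z^3=t(1-t)^2$, $t=z^3+O(z^6)$.
   Context: For $h\ge1$, $D_h=D_h(z)$ is the determinant of the $h\times h$ matrix $T_h$ (rows/columns indexed $0,\dots,h-1$) with entries $(T_h)_{p,p}=1$, $(T_h)_{p,p+1}=-2z$, $(T_h)_{p,p+2}=z^2$, $(T_h)_{p+1,p}=-z^2$, and all other entries $0$; $D_0=1$. Each $D_h$ is a polynomial in $z^3$ with constant term $1$. *)

From HB Require Import structures.
From mathcomp Require Import all_boot all_order all_algebra.
Set Implicit Arguments. Unset Strict Implicit. Unset Printing Implicit Defensive.
Import Order.TTheory GRing.Theory Num.Theory.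
Local Open Scope ring_scope.

Definition Tmat (h : nat) : 'M[{poly rat}]_h :=
  \matrix_(p < h, q < h)
    if (q == p :> nat) then 1
    else if (q == p.+1 :> nat) then - 2%:R *: 'X
    else if (q == p.+2 :> nat) then 'X ^+ 2
    else if (p == q.+1 :> nat) then - 'X ^+ 2
    else 0.

(* D_h = det T_h; for h = 0 the empty determinant is 1. *)
Definition D (h : nat) : {poly rat} := \det (Tmat h).

Definition fps := nat -> rat.

Definition fps_of_poly (p : {poly rat}) : fps := fun k => p`_k.

Definition fps_one : fps := fun k => if k == 0%N then 1 else 0.

Definition fps_sub (f g : fps) : fps := fun k => f k - g k.

Definition fps_mul (f g : fps) : fps :=
  fun k => \sum_(j < k.+1) f j * g (k - j)%N.

Fixpoint fps_pow (f : fps) (m : nat) : fps :=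
  match m with 0 => fps_one | m'.+1 => fps_mul f (fps_pow f m') end.

Fixpoint inv_seq (f : fps) (m : nat) : seq rat :=
  match m with
  | 0 => [::]
  | m'.+1 =>
      let s := inv_seq f m' in
      rcons s (if m' == 0%N then (f 0%N)^-1
               else - (f 0%N)^-1 * \sum_(j < m') f (m' - j)%N * s`_j)
  end.

Definition fps_inv (f : fps) : fps := fun k => (inv_seq f k.+1)`_k.

Definition fps_div (f g : fps) : fps := fps_mul f (fps_inv g).

(* Write u = z^3.  Expanding det T_{m+1} along its last row gives the recurrence
   D_{n+3} = D_{n+2} - 2u D_{n+1} + u^2 D_n, with D_0 = D_1 = 1, D_2 = 1 - 2u.
   When u = t(1-t)^2, the characteristic polynomial x^3 - x^2 + 2ux - u^2 has the
   root r = (1-t)^2; the two other roots have sum t(2-t) and product t^2(1-t)^2,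
   both divisible by t = O(z^3).  Hence E_m = D_{m+1} - r D_m satisfies a
   second-order recurrence with coefficients O(z^3), so E_m = O(z^m), and by
   iteration D_{m+i} = r^i D_m + O(z^m).  As D_n has constant term 1 it is
   invertible, and dividing yields D_{n-i}/D_n = r^{-i} + O(z^{n-i}).

   Every power series identity is checked on finitely many coefficients: "f
   agrees with the polynomial p below degree N" turns the operations on [fps]
   into polynomial arithmetic modulo X^N, i.e. divisibility by 'X^N. *)
From HB Require Import structures.
From mathcomp Require Import all_boot all_order all_algebra.
From mathcomp Require Import zify ring.
Import Order.TTheory GRing.Theory Num.Theory.
Local Open Scope ring_scope.

Definition Tentry (p q : nat) : {poly rat} :=
  if q == p then 1
  else if q == p.+1 then - 2%:R *: 'X
  else if q == p.+2 then 'X ^+ 2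
  else if p == q.+1 then - 'X ^+ 2
  else 0.

Lemma Tmat_entry h (p q : 'I_h) : Tmat h p q = Tentry p q.
Proof. by rewrite mxE. Qed.

Lemma Tentry_below p q : (q < p)%N -> Tentry p q = if p == q.+1 then - 'X ^+ 2 else 0.
Proof. by move=> lt_qp; rewrite /Tentry 3?ifF //; apply/negbTE; lia. Qed.

Lemma sign_double (R : pzRingType) (a : nat) : (-1) ^+ (a + a) = 1 :> R.
Proof. by rewrite exprD -expr2 sqrr_sign. Qed.

(* Induction expands along the last
   row, whose only nonzero entries are -X^2 and A_{m,m}; the minor of -X^2 is
   again of this shape, one size smaller. *)
Lemma det_Tmat_col m (A : 'M[{poly rat}]_m.+1) :
  (forall p q : 'I_m.+1, (q < m)%N -> A p q = Tentry p q) ->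
  \det A = \sum_(j < m.+1) ('X ^+ 2) ^+ (m - j) * A j ord_max * D j.
Proof.
elim: m A => [|m IH] A A_T.
  by rewrite det_mx11 big_ord1 /D det_mx00 mulr1 mul1r; congr (A _ _); apply: val_inj.
set prev := widen_ord (leqnSn m.+1) ord_max.
set B := row' ord_max (col' prev A).
have lift_last (p : 'I_m.+1) : lift ord_max p = widen_ord (leqnSn m.+1) p.
  by apply: val_inj; rewrite /= /bump leqNgt ltn_ord.
have B_T (p q : 'I_m.+1) : (q < m)%N -> B p q = Tentry p q.
  move=> lt_qm; have bump_q : bump m q = q by rewrite /bump leqNgt lt_qm.
  by rewrite !mxE lift_last A_T /= bump_q // ltnS ltnW.
have B_col (j : 'I_m.+1) : B j ord_max = A (widen_ord (leqnSn m.+1) j) ord_max.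
  by rewrite !mxE lift_last; congr (A _ _); apply: val_inj; rewrite /= /bump leqnn.
have minor_last : cofactor A ord_max ord_max = D m.+1.
  rewrite /cofactor sign_double mul1r /D; congr (\det _).
  by apply/matrixP => p q; rewrite !mxE !lift_last A_T //= ltn_ord.
have minor_prev : cofactor A ord_max prev = - \det B.
  by rewrite /cofactor /= addSn exprS sign_double mulr1 mulN1r.
have last_row (q : 'I_m.+1) : A ord_max (widen_ord (leqnSn m.+1) q) =
    if q == m :> nat then - 'X ^+ 2 else 0.
  by rewrite A_T ?Tentry_below ?ltn_ord //= eqSS eq_sym.
rewrite (expand_det_row _ ord_max) big_ord_recr /= minor_last big_ord_recr /=.
rewrite big1 ?add0r => [|q _]; last by rewrite last_row ifF ?mul0r // (ltn_eqF (ltn_ord q)).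
rewrite minor_prev last_row eqxx mulrNN (IH B B_T) [RHS]big_ord_recr /= subnn expr0 mul1r.
congr (_ + _); rewrite mulr_sumr; apply: eq_bigr => j _.
have le_jm : (j <= m)%N by rewrite -ltnS.
by rewrite B_col (subSn le_jm) [_ ^+ (m - j).+1]exprS !mulrA.
Qed.

Lemma D_last_col m :
  D m.+1 = \sum_(j < m.+1) ('X ^+ 2) ^+ (m - j) * Tentry j m * D j.
Proof.
rewrite {1}/D det_Tmat_col => [|p q _]; last exact: Tmat_entry.
by apply: eq_bigr => j _; rewrite Tmat_entry.
Qed.

Lemma D0 : D 0 = 1. Proof. exact: det_mx00. Qed.

Lemma D1 : D 1 = 1.
Proof. by rewrite D_last_col big_ord1 /Tentry /= expr0 !mul1r D0. Qed.

Lemma D2 : D 2 = 1 - 2%:R * 'X ^+ 3.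
Proof.
rewrite D_last_col !big_ord_recr big_ord0 /Tentry /= D0 D1 -mul_polyC polyCN polyC_natr.
ring.
Qed.

(* The three-term recurrence: column m+2 of T has only three nonzero entries. *)
Lemma D_rec n : D n.+3 = D n.+2 - 2%:R * 'X ^+ 3 * D n.+1 + 'X ^+ 6 * D n.
Proof.
rewrite D_last_col !big_ord_recr /= big1 => [|j _]; last first.
  by rewrite /Tentry 4?ifF ?mulr0 ?mul0r //; apply/negbTE; have := ltn_ord j; lia.
rewrite /Tentry !eqxx /= 3?ifF; try by apply/negbTE; lia.
rewrite subnn subSnn (_ : (n.+2 - n = 2)%N); last by lia.
rewrite -mul_polyC polyCN polyC_natr add0r; ring.
Qed.

(* Each D_n has constant term 1 (evaluate the recurrence at 0); hence D_n is
   invertible as a power series. *)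
Lemma D_coef0 n : (D n)`_0 = 1.
Proof.
rewrite -horner_coef0; elim/ltn_ind: n => -[|[|[|n]]] IH.
- by rewrite D0 hornerE.
- by rewrite D1 hornerE.
- by rewrite D2 !hornerE.
- by rewrite D_rec !hornerE IH.
Qed.

Lemma dvdXnP {R : fieldType} m (p : {poly R}) :
  reflect (forall j, (j < m)%N -> p`_j = 0) ('X^m %| p).
Proof.
apply: (iffP idP) => [/dvdpP [q ->] j lt_jm | low_p]; first by rewrite coefMXn lt_jm.
apply/modp_eq0P; rewrite -Pdiv.IdomainMonic.take_poly_modp; apply/polyP => j.
by rewrite coef_take_poly coef0; case: ifP => // /low_p.
Qed.

Lemma dvdXn_coef {R : fieldType} {m : nat} {p q : {poly R}} {j : nat} :
  'X^m %| p - q -> (j < m)%N -> p`_j = q`_j.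
Proof. by move=> /dvdXnP low_pq /low_pq /eqP; rewrite coefB subr_eq0 => /eqP. Qed.

Lemma dvdXn_mul {R : idomainType} {a b c : nat} {p q : {poly R}} :
  'X^a %| p -> 'X^b %| q -> (c <= a + b)%N -> 'X^c %| p * q.
Proof.
move=> Xa_p Xb_q le_c; apply: dvdp_trans (dvdp_exp2l _ le_c) _.
by rewrite exprD; apply: dvdp_mul.
Qed.

Lemma dvdXn_le {R : idomainType} {a c : nat} {p : {poly R}} :
  'X^a %| p -> (c <= a)%N -> 'X^c %| p.
Proof. by move=> Xa_p le_ca; apply: dvdp_trans (dvdp_exp2l _ le_ca) Xa_p. Qed.

(* Division modulo d: if q inverts a, w inverts b and a = b c, then c q = w. *)
Lemma dvdp_ratio {R : idomainType} (d a b c q w : {poly R}) :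
  d %| a * q - 1 -> d %| b * w - 1 -> d %| a - b * c -> d %| c * q - w.
Proof.
move=> inv_q inv_w ab_c.
have -> : c * q - w = - ((b * w - 1) * (c * q)) - w * q * (a - b * c) + w * (a * q - 1).
  by ring.
apply: dvdp_add (dvdp_mull _ inv_q).
by apply: dvdp_sub (dvdp_mull _ ab_c); rewrite dvdpNr dvdp_mulr.
Qed.

Definition agree (N : nat) (f : fps) (p : {poly rat}) := forall k, (k < N)%N -> f k = p`_k.

Definition trunc (N : nat) (f : fps) : {poly rat} := \poly_(k < N) f k.

Lemma agree_trunc N f : agree N f (trunc N f).
Proof. by move=> k lt_kN; rewrite coef_poly lt_kN. Qed.

Lemma agree_poly N p : agree N (fps_of_poly p) p.
Proof. by []. Qed.

Lemma agree_one N : agree N fps_one 1.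
Proof. by move=> k _; rewrite coef1 /fps_one; case: (k == 0)%N. Qed.

Lemma agree_sub {N f g p q} : agree N f p -> agree N g q -> agree N (fps_sub f g) (p - q).
Proof. by move=> fp gq k lt_kN; rewrite coefB /fps_sub fp ?gq. Qed.

(* Coefficients below N of a Cauchy product only involve coefficients below N. *)
Lemma agree_mul {N f g p q} : agree N f p -> agree N g q -> agree N (fps_mul f g) (p * q).
Proof.
move=> fp gq k lt_kN; rewrite coefM; apply: eq_bigr => j _.
by rewrite fp ?gq //; have := ltn_ord j; lia.
Qed.

Lemma agree_pow {N f p} m : agree N f p -> agree N (fps_pow f m) (p ^+ m).
Proof.
move=> fp; elim: m => [|m IH]; first exact: agree_one.
by rewrite exprS; apply: agree_mul.
Qed.

Lemma agree_dvdXn {N f p q} : agree N f p -> agree N f q -> 'X^N %| p - q.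
Proof. by move=> fp fq; apply/dvdXnP => j lt_jN; rewrite coefB -fp // -fq // subrr. Qed.

Lemma fps_pow_coef0 f m : fps_pow f m 0 = f 0%N ^+ m.
Proof. by elim: m => [|m IH] //=; rewrite /fps_mul big_ord1 IH exprS. Qed.

Lemma size_inv_seq f m : size (inv_seq f m) = m.
Proof. by elim: m => //= m IH; rewrite size_rcons IH. Qed.

Lemma inv_seq_nth f m j : (j < m)%N -> (inv_seq f m)`_j = fps_inv f j.
Proof.
elim: m => // m IH; rewrite ltnS leq_eqVlt => /predU1P [-> // | lt_jm].
by rewrite /= nth_rcons size_inv_seq lt_jm IH.
Qed.

(* fps_inv f is a right inverse of f: the k-th coefficient recursion is exactly
   the vanishing of the k-th coefficient of f * fps_inv f - 1. *)
Lemma fps_mul_inv f : f 0%N != 0 -> forall k, fps_mul f (fps_inv f) k = fps_one k.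
Proof.
move=> f0 k; rewrite /fps_mul (reindex_inj rev_ord_inj) /=.
rewrite (eq_bigr (fun j : 'I_k.+1 => f (k - j)%N * fps_inv f j)); last first.
  by move=> j _; rewrite /= subSS subKn // -ltnS.
rewrite big_ord_recr /= subnn [fps_inv f k]/fps_inv /= nth_rcons size_inv_seq ltnn eqxx.
rewrite /fps_one; case: k => [|k]; first by rewrite big_ord0 add0r /= mulfV.
under eq_bigr => j _ do rewrite -(@inv_seq_nth f k.+1 j (ltn_ord j)).
by rewrite /= mulrA mulrN mulfV // mulN1r subrr.
Qed.

Lemma agree_inv {N f p} :
  f 0%N != 0 -> agree N f p -> 'X^N %| p * trunc N (fps_inv f) - 1.
Proof.
move=> f0 fp; apply: (@agree_dvdXn N (fps_mul f (fps_inv f))).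
  exact: agree_mul fp (agree_trunc _ _).
by move=> k lt_kN; rewrite fps_mul_inv // (@agree_one N k lt_kN).
Qed.

(* The congruences for a polynomial T solving X^3 = T (1-T)^2 modulo X^P,
   with X^3 | T; r = (1-T)^2 is then an approximate root of the characteristic
   polynomial of the recurrence. *)
Section TruncatedRoot.
Context {P : nat} {T : {poly rat}}.
Hypothesis T_low : 'X^3 %| T.
Hypothesis T_root : 'X^P %| 'X^3 - T * (1 - T) ^+ 2.

(* E_m = D_{m+1} - r D_m vanishes to order min(m, P): E_{m+2} equals
   T(2-T) E_{m+1} - T^2(1-T)^2 E_m up to a multiple of X^3 - T(1-T)^2. *)
Lemma D_step_cong m : 'X^(minn m P) %| D m.+1 - (1 - T) ^+ 2 * D m.
Proof.
set e := 'X^3 - T * (1 - T) ^+ 2.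
suff two_steps : forall m, 'X^(minn m P) %| D m.+1 - (1 - T) ^+ 2 * D m /\
    'X^(minn m.+1 P) %| D m.+2 - (1 - T) ^+ 2 * D m.+1 by exact: (two_steps m).1.
elim=> [|{}m [E_m E_m1]].
  split; first by rewrite min0n dvd1p.
  rewrite D2 D1 (_ : _ - _ = 'X^3 * (- 2%:R) + T * (2%:R - T)); last by ring.
  by apply: (@dvdXn_le _ 3); [rewrite dvdp_add ?dvdp_mulIl ?dvdp_mulr | lia].
split=> //.
have -> : D m.+3 - (1 - T) ^+ 2 * D m.+2 =
    T * (2%:R - T) * (D m.+2 - (1 - T) ^+ 2 * D m.+1)
  - T * (T * (1 - T) ^+ 2) * (D m.+1 - (1 - T) ^+ 2 * D m)
  - e * (2%:R * D m.+1 - (T * (1 - T) ^+ 2 + 'X^3) * D m).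
  by rewrite D_rec /e; ring.
apply: dvdp_sub; last by apply: dvdXn_le (dvdp_mulr _ T_root) _; lia.
apply: dvdp_sub; rewrite -mulrA.
  by apply: dvdXn_mul T_low (dvdp_mull _ E_m1) _; lia.
by apply: dvdXn_mul T_low (dvdp_mull _ E_m) _; lia.
Qed.

Lemma D_iter_cong m j : 'X^(minn m P) %| D (m + j) - ((1 - T) ^+ 2) ^+ j * D m.
Proof.
elim: j => [|j IH]; first by rewrite addn0 mul1r subrr dvdp0.
rewrite addnS (_ : _ - _ = (D (m + j).+1 - (1 - T) ^+ 2 * D (m + j))
    + (1 - T) ^+ 2 * (D (m + j) - ((1 - T) ^+ 2) ^+ j * D m)); last by rewrite exprS; ring.
by rewrite dvdp_add ?dvdp_mull //; apply: dvdXn_le (D_step_cong _) _; lia.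
Qed.

End TruncatedRoot.

(* For n >= i + k + 1 the coefficient k is already exact: work modulo X^(k+1)
   with T the truncation of t, and divide the congruence D_n = r^i D_{n-i}. *)
Theorem mainTheorem4 (t : fps)
  (ht_eq : fps_of_poly ('X ^+ 3) = fps_mul t (fps_pow (fps_sub fps_one t) 2))
  (ht_low : forall j : nat, (j < 6)%N -> t j = (if j == 3%N then 1 else 0)) :
  forall (i k : nat), exists N : nat, forall n : nat, (N <= n)%N ->
    fps_div (fps_of_poly (D (n - i))) (fps_of_poly (D n)) k
    = fps_inv (fps_pow (fps_sub fps_one t) (2 * i)) k.
Proof.
move=> i k; exists (i + k.+1)%N => n le_n; set P := k.+1.
set T := trunc P t; set S := fps_pow (fps_sub fps_one t) (2 * i).
have agree_T : agree P (fps_sub fps_one t) (1 - T).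
  exact: agree_sub (agree_one P) (agree_trunc P t).
have t_low j : (j < 3)%N -> t j = 0 by move=> lt_j3; rewrite ht_low ?ltn_eqF //; lia.
have T_low : 'X^3 %| T by apply/dvdXnP => j lt_j3; rewrite coef_poly t_low ?if_same.
have T_root : 'X^P %| 'X^3 - T * (1 - T) ^+ 2.
  apply: agree_dvdXn (agree_poly P _) _; rewrite ht_eq.
  exact: agree_mul (agree_trunc P t) (agree_pow 2 agree_T).
have cong : 'X^P %| D n - ((1 - T) ^+ 2) ^+ i * D (n - i).
  have -> : P = minn (n - i) P by lia.
  by have := D_iter_cong T_low T_root (n - i) i; rewrite subnK //; lia.
have Dn0 : fps_of_poly (D n) 0 != 0 by rewrite /fps_of_poly D_coef0 oner_neq0.
have S0 : S 0 != 0.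
  by rewrite /S fps_pow_coef0 /fps_sub /fps_one t_low // subr0 expr1n oner_neq0.
have inv_Dn := agree_inv Dn0 (agree_poly P (D n)).
have inv_S := agree_inv S0 (agree_pow (2 * i) agree_T); rewrite exprM in inv_S.
have lt_kP : (k < P)%N by [].
rewrite /fps_div (agree_mul (agree_poly P _) (agree_trunc P _) k lt_kP).
rewrite (agree_trunc P (fps_inv S) k lt_kP).
apply: (dvdXn_coef _ lt_kP).
exact: dvdp_ratio inv_Dn inv_S cong.
Qed.
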